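(* Let $\{G_i\}$ be a family of graphs with common induced subgraph $J$, embedded as $J_i\subseteq G_i$, and let $H=\amalg\{(G_i|J_i)\}$. If the diameter of $J$ is at most $2$, then every $G_i$ is isometrically embedded in $H$.
   Context: $d_G$ is shortest-path distance in $G$. $J$ is a common induced subgraph of each $G_i$ via injective maps $\iota_i:V(J)\to V(G_i)$ with $\iota_i(x)\iota_i(y)\in E(G_i)$ iff $xy\in E(J)$; $J_i$ is the induced image. $H=\amalg\{(G_i|J_i)\}$ is obtained from the disjoint union of the $G_i$ by identifying, for each $x\in V(J)$, all vertices $\iota_i(x)$ into one vertex; each $G_i$ is regarded as a subgraph of $H$. A subgraph $G$ of $H$ is isometrically embedded in $H$ if $d_G(u,v)=d_H(u,v)$ for all $u,v\in V(G)$. *)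

From Stdlib Require Import Arith ClassicalEpsilon.

Record sgraph := SGraph {
  vert :> Type;
  adj : vert -> vert -> Prop;
  adj_sym : forall x y, adj x y -> adj y x;
  adj_irrefl : forall x, ~ adj x x }.

Inductive walk {V : Type} (a : V -> V -> Prop) : V -> V -> nat -> Prop :=
| walk_nil : forall u, walk a u u 0
| walk_cons : forall u w v n, a u w -> walk a w v n -> walk a u v (S n).

(* is_dist a u v d : the shortest-path distance from u to v is (finite and
   equal to) d.  If no d satisfies it, the distance is infinite. *)
Definition is_dist {V : Type} (a : V -> V -> Prop) (u v : V) (d : nat) : Prop :=
  walk a u v d /\ forall n, walk a u v n -> d <= n.

Definition induced_embedding (J G : sgraph) (f : J -> G) : Prop :=
  (forall x y, f x = f y -> x = y) /\
  (forall x y, adj G (f x) (f y) <-> adj J x y).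

Definition diam_le2 (J : sgraph) : Prop :=
  forall x y : J, exists d, is_dist (adj J) x y d /\ d <= 2.

Section Amalgam.
Variables (I : Type) (J : sgraph) (G : I -> sgraph) (iota : forall i, J -> G i).

(* Vertices of H = amalg (G_i | J_i): the vertices of J (the identified
   vertices iota_i(x)), together with, for each i, the vertices of G_i
   outside J_i. *)
Inductive amalg_vert : Type :=
| AJ : vert J -> amalg_vert
| AG : forall i (v : G i), ~ (exists x, iota i x = v) -> amalg_vert.

Definition amalg_emb (i : I) (v : G i) : amalg_vert :=
  match excluded_middle_informative (exists x, iota i x = v) with
  | left h => AJ (proj1_sig (constructive_indefinite_description _ h))
  | right h => AG i v h
  end.

Definition amalg_adj (a b : amalg_vert) : Prop :=
  exists i (u v : G i), adj (G i) u v /\ amalg_emb i u = a /\ amalg_emb i v = b.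

End Amalgam.

Arguments amalg_emb {I J G} iota i v.
Arguments amalg_adj {I J G} iota a b.

(* A walk in H between two vertices of G_i can only leave G_i through J:
   an excursion outside G_i starts at some iota_i(y) and returns at some
   iota_i(x), and has length at least 2.  Since diam J <= 2, it can be
   replaced by a path of J of length at most 2, whose image lies in G_i.
   Hence every walk in H between images of G_i-vertices can be shortened
   to a walk in G_i, while walks of G_i are walks of H. *)
From Stdlib Require Import Lia Classical ClassicalEpsilon Eqdep.

Lemma walk_cat {V : Type} (a : V -> V -> Prop) x y z n m :
  walk a x y n -> walk a y z m -> walk a x z (n + m).
Proof. induction 1; simpl; intros; [assumption | econstructor; eauto]. Qed.

Lemma walk_map {V W : Type} (a : V -> V -> Prop) (b : W -> W -> Prop) (f : V -> W) :
  (forall x y, a x y -> b (f x) (f y)) ->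
  forall x y n, walk a x y n -> walk b (f x) (f y) n.
Proof. intros hf; induction 1; econstructor; eauto. Qed.

Lemma is_dist_transfer {V W : Type} (a : V -> V -> Prop) (b : W -> W -> Prop)
    u v u' v' :
  (forall n, walk a u v n -> walk b u' v' n) ->
  (forall n, walk b u' v' n -> exists m, m <= n /\ walk a u v m) ->
  forall d, is_dist a u v d <-> is_dist b u' v' d.
Proof.
  intros ab ba d; split.
  - intros [hd hmin]; split; [now apply ab |].
    intros n hn; destruct (ba n hn) as [m [hm hw]]; specialize (hmin m hw); lia.
  - intros [hd hmin]; destruct (ba d hd) as [m [hm hw]].
    assert (m = d) as -> by (specialize (hmin m (ab m hw)); lia).
    split; [assumption |].
    intros n hn; exact (hmin n (ab n hn)).
Qed.

Section Amalgam.
Variables (I : Type) (J : sgraph) (G : I -> sgraph) (iota : forall i, J -> G i).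
Hypothesis Hiota : forall i, induced_embedding J (G i) (iota i).

Notation emb := (amalg_emb iota).
Notation Hadj := (amalg_adj iota).

Lemma amalg_emb_iota i x : emb i (iota i x) = AJ I J G iota x.
Proof.
  unfold amalg_emb; destruct excluded_middle_informative as [h | h].
  - destruct (constructive_indefinite_description _ h) as [x' e]; simpl.
    f_equal; exact (proj1 (Hiota i) _ _ e).
  - exfalso; apply h; eauto.
Qed.

Lemma amalg_emb_AJ i p x : emb i p = AJ I J G iota x -> p = iota i x.
Proof.
  unfold amalg_emb; destruct excluded_middle_informative as [h | h]; intros e.
  - injection e as <-; now destruct (constructive_indefinite_description _ h).
  - discriminate.
Qed.

Lemma amalg_emb_inj i p q : emb i p = emb i q -> p = q.
Proof.
  intros e.
  destruct (classic (exists x, iota i x = p)) as [[x <-] | hp].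
  - rewrite amalg_emb_iota in e; symmetry; exact (amalg_emb_AJ _ _ _ (eq_sym e)).
  - destruct (classic (exists x, iota i x = q)) as [[x <-] | hq].
    + rewrite amalg_emb_iota in e; exact (amalg_emb_AJ _ _ _ e).
    + unfold amalg_emb in e.
      destruct excluded_middle_informative; [contradiction |].
      destruct excluded_middle_informative; [contradiction |].
      injection e as e; exact (inj_pair2 _ _ _ _ _ e).
Qed.

Lemma amalg_emb_glued i j p q :
  j <> i -> emb j p = emb i q -> exists x, q = iota i x.
Proof.
  intros ne e.
  destruct (classic (exists x, iota i x = q)) as [[x <-] | hq]; [eauto |].
  unfold amalg_emb at 2 in e.
  destruct excluded_middle_informative; [contradiction |].
  unfold amalg_emb in e; destruct excluded_middle_informative; [discriminate |].
  injection e; contradiction.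
Qed.

Lemma amalg_adj_sym a b : Hadj a b -> Hadj b a.
Proof.
  intros [j [u [v [h [e1 e2]]]]]; exists j, v, u; auto using adj_sym.
Qed.

Lemma amalg_adj_emb i u w : Hadj (emb i u) (emb i w) <-> adj (G i) u w.
Proof.
  split; [| now exists i, u, w].
  intros [j [u' [w' [h [e1 e2]]]]].
  destruct (classic (j = i)) as [-> | ne].
  - now rewrite <- (amalg_emb_inj _ _ _ e1), <- (amalg_emb_inj _ _ _ e2).
  - destruct (amalg_emb_glued _ _ _ _ ne e1) as [x ->].
    destruct (amalg_emb_glued _ _ _ _ ne e2) as [y ->].
    rewrite amalg_emb_iota in e1, e2.
    rewrite (amalg_emb_AJ _ _ _ e1), (amalg_emb_AJ _ _ _ e2) in h.
    apply (proj2 (Hiota i)), (proj2 (Hiota j)), h.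
Qed.

Lemma amalg_adj_leave i u b :
  Hadj (emb i u) b -> (forall w, b <> emb i w) -> exists y, u = iota i y.
Proof.
  intros [j [u' [w' [h [e1 e2]]]]] out.
  destruct (classic (j = i)) as [-> | ne].
  - exfalso; exact (out w' (eq_sym e2)).
  - exact (amalg_emb_glued _ _ _ _ ne e1).
Qed.

Lemma walk_emb i u v n : walk (adj (G i)) u v n -> walk Hadj (emb i u) (emb i v) n.
Proof. apply walk_map; intros; now apply amalg_adj_emb. Qed.

Hypothesis HJ : diam_le2 J.

(* The second conjunct covers walks starting outside G_i: they enter G_i
   through J, and the entry step is paid for by the bound [m + 1 <= n]. *)
Lemma walk_amalg_shorten i a b n :
  walk Hadj a b n -> forall v, b = emb i v ->
  (forall u, a = emb i u -> exists m, m <= n /\ walk (adj (G i)) u v m) /\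
  ((forall u, a <> emb i u) ->
     exists x m, walk (adj (G i)) (iota i x) v m /\ m + 1 <= n).
Proof.
  induction 1 as [a | a w b n hab hw IH]; intros v ->.
  - split.
    + intros u e; rewrite (amalg_emb_inj _ _ _ e); exists 0; split; constructor.
    + intros out; exfalso; exact (out v eq_refl).
  - destruct (IH v eq_refl) as [IHin IHout].
    destruct (classic (exists w', w = emb i w')) as [[w' ->] | wo];
      [| assert (out_w : forall w', w <> emb i w') by (intros w' e; apply wo; eauto)];
      split.
    + intros u ->; destruct (IHin w' eq_refl) as [m [hm hw']].
      exists (S m); split; [lia |].
      econstructor; [apply amalg_adj_emb |]; eassumption.
    + intros out.
      destruct (amalg_adj_leave _ _ _ (amalg_adj_sym _ _ hab) out) as [x ->].
      destruct (IHin _ eq_refl) as [m [hm hw']]; exists x, m; split; [assumption | lia].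
    + intros u ->.
      destruct (amalg_adj_leave _ _ _ hab out_w) as [y ->].
      destruct (IHout out_w) as [x [m [hw' hm]]].
      destruct (HJ y x) as [d [[hd _] hd2]].
      exists (d + m); split; [lia |].
      eapply walk_cat; [| exact hw'].
      exact (walk_map _ _ _ (fun _ _ h => proj2 (proj2 (Hiota i) _ _) h) _ _ _ hd).
    + intros _; destruct (IHout out_w) as [x [m [hw' hm]]].
      exists x, m; split; [assumption | lia].
Qed.

End Amalgam.

Theorem lemma3 (I : Type) (J : sgraph) (G : I -> sgraph)
  (iota : forall i, J -> G i)
  (Hiota : forall i, induced_embedding J (G i) (iota i))
  (HJ : diam_le2 J) :
  forall i (u v : G i) (d : nat),
    is_dist (adj (G i)) u v d <->
    is_dist (amalg_adj iota) (amalg_emb iota i u) (amalg_emb iota i v) d.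
Proof.
  intros i u v.
  apply is_dist_transfer.
  - apply walk_emb; assumption.
  - intros n hn.
    exact (proj1 (walk_amalg_shorten I J G iota Hiota HJ i _ _ _ hn v eq_refl) u eq_refl).
Qed.
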